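(* Let $R\in\operatorname{Ob}(\hat{\mathcal C})$, $n\ge2$, $G=\mathrm{SL}_n(R)$, $\bar\rho:G\to\mathrm{GL}_n(k)$ induced by reduction, $\iota:G\hookrightarrow\mathrm{GL}_n(R)$ the inclusion, and let $S\in\operatorname{Ob}(\hat{\mathcal C})$. (i) The map $\iota_*(S):\mathrm{Hom}_{\hat{\mathcal C}}(R,S)\to\mathrm{Def}_{\bar\rho}(S)$, $f\mapsto[\mathrm{GL}_n(f)\circ\iota]$, is injective. (ii) For $\xi\in\mathrm{Def}_{\bar\rho}(S)$, we have $\xi\in\operatorname{im}\iota_*(S)$ if and only if there is a lift $\rho\in\xi$ such that for every pair $a\ne b$ in $\{1,\dots,n\}$ and every $r\in R$ there exists $c^r_{ab}\in S$ with $\rho(t^r_{ab})=t^{c^r_{ab}}_{ab}$.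
   Context: Let $k$ be a finite field. $\hat{\mathcal C}$ is the category of complete noetherian local commutative rings with residue field $k$, with local homomorphisms inducing the identity on $k$; $\mathfrak m_S$ is the maximal ideal of $S$. For a profinite group $G$ and continuous $\bar\rho:G\to\mathrm{GL}_n(k)$, a lift to $S$ is a continuous $\rho:G\to\mathrm{GL}_n(S)$ reducing to $\bar\rho$; lifts are strictly equivalent if conjugate by an element of $I+M_n(\mathfrak m_S)$; $\mathrm{Def}_{\bar\rho}(S)$ is the set of strict equivalence classes $[\rho]$. $\mathrm{GL}_n(f)$ applies $f$ entrywise. For a commutative ring $A$, $r\in A$ and $a\ne b$, $e_{ab}$ is the matrix unit with $1$ in position $(a,b)$ and $t^r_{ab}=I+re_{ab}$. *)

From HB Require Import structures.
From mathcomp Require Import all_boot all_order all_algebra all_field.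
Set Implicit Arguments.
Unset Strict Implicit.
Unset Printing Implicit Defensive.
Import GRing.Theory.
Local Open Scope ring_scope.

(* An object of \hat C is modelled as a commutative ring R together with a
   reduction map pi : R -> k (a ring morphism).  The maximal ideal is ker pi. *)
Section LocalRings.
Variables (k : fieldType) (R : comUnitRingType) (pi : {rmorphism R -> k}).

Definition mideal (x : R) : Prop := pi x = 0.

Fixpoint mpow (N : nat) : R -> Prop :=
  match N with
  | 0 => fun _ => True
  | N'.+1 => fun x => exists s : seq (R * R),
      (forall p, p \in s -> mideal p.1 /\ mpow N' p.2) /\
      x = \sum_(p <- s) p.1 * p.2
  end.

Definition is_ideal (I : R -> Prop) : Prop :=
  I 0 /\ (forall x y, I x -> I y -> I (x + y)) /\ (forall a x, I x -> I (a * x)).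

Definition noetherian : Prop :=
  forall I : R -> Prop, is_ideal I ->
    exists g : seq R, forall x, I x <->
      exists c : seq R, size c = size g /\ x = \sum_(i < size g) c`_i * g`_i.

Definition local_with_residue : Prop :=
  (forall y : k, exists x : R, pi x = y) /\
  (forall x : R, pi x != 0 -> x \is a GRing.unit).

Definition madic_separated : Prop :=
  forall x : R, (forall N, mpow N x) -> x = 0.

Definition madic_complete : Prop :=
  forall u : nat -> R,
    (forall N, exists M, forall i j, (M <= i)%N -> (M <= j)%N -> mpow N (u i - u j)) ->
    exists l : R, forall N, exists M, forall i, (M <= i)%N -> mpow N (u i - l).

Definition is_CObj : Prop :=
  local_with_residue /\ noetherian /\ madic_separated /\ madic_complete.

Definition congr_mx (n N : nat) (A B : 'M[R]_n) : Prop :=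
  forall i j, mpow N (A i j - B i j).

Definition inSL (n : nat) (g : 'M[R]_n) : Prop := \det g = 1.

End LocalRings.

Definition is_Chom (k : fieldType) (R S : comUnitRingType)
  (piR : {rmorphism R -> k}) (piS : {rmorphism S -> k}) (f : {rmorphism R -> S}) : Prop :=
  forall x, piS (f x) = piR x.

(* rho is a lift to S of rhobar = reduction : SL_n(R) -> GL_n(k):
   a continuous group homomorphism SL_n(R) -> GL_n(S) reducing to rhobar.
   (Only values on SL_n(R) matter.)  Continuity of a homomorphism is
   expressed as continuity at the identity for the adic topologies. *)
Definition is_lift (k : fieldType) (R S : comUnitRingType)
  (piR : {rmorphism R -> k}) (piS : {rmorphism S -> k}) (n : nat)
  (rho : 'M[R]_n -> 'M[S]_n) : Prop :=
  (forall g, inSL g -> rho g \in unitmx) /\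
  (forall g h, inSL g -> inSL h -> rho (g *m h) = rho g *m rho h) /\
  (forall g, inSL g -> map_mx piS (rho g) = map_mx piR g) /\
  (forall m : nat, exists N : nat, forall g, inSL g ->
     congr_mx piR N g 1%:M -> congr_mx piS m (rho g) 1%:M).

(* strict equivalence: conjugation by an element of I + M_n(m_S) *)
Definition strict_equiv (k : fieldType) (R S : comUnitRingType)
  (piS : {rmorphism S -> k}) (n : nat) (rho1 rho2 : 'M[R]_n -> 'M[S]_n) : Prop :=
  exists M : 'M[S]_n, map_mx piS M = 1%:M /\
    forall g : 'M[R]_n, inSL g -> rho2 g = M *m rho1 g *m invmx M.

Definition elem_mx (A : comUnitRingType) (n : nat) (a b : 'I_n) (r : A) : 'M[A]_n :=
  1%:M + r *: delta_mx a b.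

(* Everything is reduced to the elementary matrices
   t^r_{ab} = 1 + r e_{ab}.
   - Over a local ring, SL_n(R) is generated by the t^r_{ab}: row
     operations create a pivot 1 in the top left corner and clear the first
     column; transposing clears the first row, and induction on n finishes.
   - Part (i): if M GL_n(f) M^-1 = GL_n(g) with M = 1 mod m_S, comparing the
     (a, b) entries of M t^{f r}_{ab} = t^{g r}_{ab} M gives f = g.
   - Part (ii), "only if": GL_n(f) o iota maps t^r_{ab} to t^{f r}_{ab}.
   - Part (ii), "if": write rho(t^r_{ab}) = t^{c(a,b,r)}_{ab}.  The Steinberg
     relations (additivity, commutators [t_{ab}, t_{bc}] = t_{ac}, and the
     Weyl elements t^u_{ab} t^{-u^-1}_{ba} t^u_{ab}) force
     c(a, b, r) = lambda_a lambda_b^-1 f(r) for a ring morphism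
     f(r) = c(0,1,r) c(1,0,1) and units lambda_a = 1 mod m_S.  Hence rho is
     the conjugate of GL_n(f) o iota by diag(lambda) on generators, hence on
     all of SL_n(R).  Multiplicativity of f is first shown on units and then
     extended using that every element of a local ring is u or u + 1. *)

From HB Require Import structures.
From mathcomp Require Import all_boot all_order all_algebra all_field.
From mathcomp Require Import ring.
Import GRing.Theory.
Local Open Scope ring_scope.

Set Implicit Arguments.
Unset Strict Implicit.
Unset Printing Implicit Defensive.

Ltac case_idx i a := let H := fresh "H" in let H' := fresh "H" in
  case: (eqVneq i a) => [?|/negPf H]; [subst i | have H' := H; rewrite eq_sym in H'].

Ltac simpl_idx := rewrite ?eqxx;
  repeat match goal with H : (_ == _) = false |- _ => rewrite ?H; clear H end;
  rewrite /=.

Section ElementaryMatrices.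
Variables (R : comUnitRingType) (n : nat).
Implicit Types (a b i j : 'I_n) (x y : R) (g : 'M[R]_n).

Lemma elem_mxE a b x i j :
  elem_mx a b x i j = (i == j)%:R + ((i == a) && (j == b))%:R * x.
Proof. by rewrite /elem_mx !mxE mulrC. Qed.

Lemma mul_elem_mx_l a b x g i j :
  (elem_mx a b x *m g) i j = g i j + (i == a)%:R * (x * g b j).
Proof.
rewrite /elem_mx mulmxDl mul1mx -scalemxAl !mxE (bigD1 b) //= mxE eqxx andbT.
rewrite big1 ?addr0 => [|l /negPf lb]; last by rewrite mxE lb andbF mul0r.
by rewrite mulrCA.
Qed.

Lemma mul_elem_mx_r a b x g i j :
  (g *m elem_mx a b x) i j = g i j + (j == b)%:R * (x * g i a).
Proof.
rewrite /elem_mx mulmxDr mulmx1 -scalemxAr !mxE (bigD1 a) //= mxE eqxx /=.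
rewrite big1 ?addr0 => [|l /negPf la]; last by rewrite mxE la /= mulr0.
by case: (j == b); rewrite ?mulr1 ?mulr0 ?mul1r ?mul0r // mulrC.
Qed.

Lemma elem_mx_offdiag a b x : a != b -> elem_mx a b x a b = x.
Proof. by move=> /negPf ab; rewrite elem_mxE ab !eqxx add0r mul1r. Qed.

Lemma elem_mx0 a b : elem_mx a b (0 : R) = 1%:M.
Proof. by rewrite /elem_mx scale0r addr0. Qed.

Lemma elem_mxD a b x y : a != b ->
  elem_mx a b x *m elem_mx a b y = elem_mx a b (x + y).
Proof.
move=> /negPf ab; have ba := ab; rewrite eq_sym in ba.
apply/matrixP=> i j; rewrite mul_elem_mx_l !elem_mxE.
case_idx i a; case_idx j b; simpl_idx; ring.
Qed.

(* t^x_{ab} is triangular with unit diagonal. *)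
Lemma det_elem_mx a b x : a != b -> \det (elem_mx a b x) = 1.
Proof.
move=> ab; have diag1 i : elem_mx a b x i i = 1.
  rewrite elem_mxE eqxx; case: eqP => [->|_]; last by rewrite mul0r addr0.
  by rewrite (negPf ab) mul0r addr0.
have offdiag i j : i != j -> elem_mx a b x i j = ((i == a) && (j == b))%:R * x.
  by move=> /negPf ij; rewrite elem_mxE ij add0r.
case: (ltnP a b) => hab.
  rewrite -det_tr det_trig; first by rewrite big1 // => i _; rewrite mxE diag1.
  apply/is_trig_mxP=> i j lij; rewrite mxE offdiag ?(negbT (gtn_eqF lij)) //.
  case: andP => [[/eqP ja /eqP ib]|_]; last by rewrite mul0r.
  by rewrite ja ib ltnNge (ltnW hab) in lij.
rewrite det_trig; first by rewrite big1.
apply/is_trig_mxP=> i j lij; rewrite offdiag ?(negbT (ltn_eqF lij)) //.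
case: andP => [[/eqP ia /eqP jb]|_]; last by rewrite mul0r.
by rewrite ia jb ltnNge hab in lij.
Qed.

Lemma trmx_elem_mx a b x : (elem_mx a b x)^T = elem_mx b a x.
Proof. by rewrite /elem_mx linearD /= linearZ /= trmx1 trmx_delta. Qed.

End ElementaryMatrices.

Lemma map_elem_mx (R S : comUnitRingType) (f : {rmorphism R -> S}) n (a b : 'I_n) x :
  map_mx f (elem_mx a b x) = elem_mx a b (f x).
Proof. by apply/matrixP=> i j; rewrite !mxE rmorphD rmorphM !rmorph_nat. Qed.

Lemma block_elem_mx (R : comUnitRingType) n (a b : 'I_n) (x : R) :
  block_mx (1%:M : 'M_1) 0 0 (elem_mx a b x) = elem_mx (rshift 1 a) (rshift 1 b) x.
Proof.
apply/matrixP=> i j; rewrite elem_mxE -[i]splitK -[j]splitK.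
case: (split i) => i'; case: (split j) => j' /=;
  rewrite ?block_mxEul ?block_mxEur ?block_mxEdl ?block_mxEdr !eq_shift
          ?elem_mxE ?mxE ?ord1 ?eqxx /= ?andbF ?mul0r ?addr0 ?add0r //.
Qed.


Section ElementaryGroup.
Variable R : comUnitRingType.

Inductive elementary n : 'M[R]_n -> Prop :=
| elementary1 : elementary 1%:M
| elementaryM (a b : 'I_n) r g :
    a != b -> elementary g -> elementary (elem_mx a b r *m g).

Lemma elementary_mul n (g h : 'M[R]_n) :
  elementary g -> elementary h -> elementary (g *m h).
Proof.
move=> Eg Eh; elim: Eg => [|a b r g' ab _ IH]; first by rewrite mul1mx.
by rewrite -mulmxA; apply: elementaryM.
Qed.

Lemma elementary_elem n (a b : 'I_n) r : a != b -> elementary (elem_mx a b r).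
Proof.
by move=> ab; rewrite -[elem_mx _ _ _]mulmx1; apply: elementaryM => //; apply: elementary1.
Qed.

Lemma det_elementary n (g : 'M[R]_n) : elementary g -> \det g = 1.
Proof.
elim=> [|a b r g' ab _ IH]; first by rewrite det1.
by rewrite det_mulmx det_elem_mx // IH mul1r.
Qed.

(* E_n(R) is closed under inverses: (t^r_{ab})^-1 = t^-r_{ab}. *)
Lemma elementary_inv n (g : 'M[R]_n) :
  elementary g -> exists2 g', elementary g' & g' *m g = 1%:M.
Proof.
elim=> [|a b r g' ab _ [g'' Eg'' g''g']].
  by exists 1%:M; [exact: elementary1 | rewrite mulmx1].
exists (g'' *m elem_mx a b (- r)); first exact: elementary_mul (elementary_elem _ ab).
by rewrite mulmxA -(mulmxA g'') elem_mxD // addNr elem_mx0 mulmx1.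
Qed.

Lemma elementary_cancel_l n (e g : 'M[R]_n) :
  elementary e -> elementary (e *m g) -> elementary g.
Proof.
move=> Ee Eeg; have [e' Ee' e'e] := elementary_inv Ee.
by rewrite -[g]mul1mx -e'e -mulmxA; apply: elementary_mul.
Qed.

Lemma elementary_tr n (g : 'M[R]_n) : elementary g -> elementary g^T.
Proof.
elim=> [|a b r g' ab _ IH]; first by rewrite trmx1; apply: elementary1.
rewrite trmx_mul trmx_elem_mx; apply: elementary_mul => //.
by apply: elementary_elem; rewrite eq_sym.
Qed.

Lemma elementary_block n (g : 'M[R]_n) :
  elementary g -> elementary (block_mx (1%:M : 'M_1) 0 0 g : 'M_(1 + n)).
Proof.
elim=> [|a b r g' ab _ IH]; first by rewrite -scalar_mx_block; apply: elementary1.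
have -> : block_mx (1%:M : 'M_1) 0 0 (elem_mx a b r *m g') =
    block_mx 1%:M 0 0 (elem_mx a b r) *m block_mx 1%:M 0 0 g'.
  by rewrite mulmx_block !mulmx0 !mul0mx !addr0 !add0r mulmx1.
by rewrite block_elem_mx; apply: elementaryM; rewrite ?eq_shift.
Qed.

End ElementaryGroup.

(* Row reduction of the first column below a pivot equal to 1, by
   elementary row operations that leave the first row untouched.  The
   induction is on the number of nonzero entries below the pivot. *)
Lemma clear_first_col (R : comUnitRingType) n (h : 'M[R]_n.+1) :
  h ord0 ord0 = 1 ->
  exists2 e, elementary e &
    (forall i, (e *m h) i ord0 = (i == ord0)%:R) /\
    (forall j, (e *m h) ord0 j = h ord0 j).
Proof.
pose below (h : 'M[R]_n.+1) := [set i : 'I_n.+1 | (i != ord0) && (h i ord0 != 0)].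
move=> h00; move: (leqnn #|below h|); move: {2}#|below h| => c.
elim: c h h00 => [|c IH] h h00 hc.
  exists 1%:M; first exact: elementary1.
  split=> [i|j]; rewrite mul1mx //; case: (eqVneq i ord0) => [->//|ni].
  move: hc; rewrite leqn0 => /eqP/cards0_eq/setP/(_ i); rewrite !inE ni /=.
  by case: eqP.
have [below0|[i]] := set_0Vmem (below h); first by apply: IH; rewrite ?below0 ?cards0.
rewrite inE => /andP[ni nhi].
pose h' := elem_mx i ord0 (- h i ord0) *m h.
have h'E i' j : h' i' j = h i' j + (i' == i)%:R * (- h i ord0 * h ord0 j).
  by rewrite mul_elem_mx_l.
have h'row j : h' ord0 j = h ord0 j by rewrite h'E eq_sym (negPf ni) mul0r addr0.
have [e Ee [e_col e_row]] : exists2 e, elementary e &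
    (forall i, (e *m h') i ord0 = (i == ord0)%:R) /\
    (forall j, (e *m h') ord0 j = h' ord0 j).
  apply: IH; first by rewrite h'row.
  have sub : below h' \subset below h :\ i.
    apply/subsetP=> i'; rewrite !inE h'E.
    case: (eqVneq i' i) => [->|_]; first by rewrite h00 mulr1 mul1r addrN eqxx andbF.
    by rewrite mul0r addr0.
  rewrite -ltnS; apply: leq_trans (subset_leq_card sub) _.
  by rewrite (cardsD1 i (below h)) inE ni nhi add1n in hc.
exists (e *m elem_mx i ord0 (- h i ord0)).
  exact: elementary_mul Ee (elementary_elem _ ni).
by rewrite -!mulmxA; split=> [i'|j]; rewrite ?e_col // e_row h'row.
Qed.

Lemma first_row_col_block (R : comUnitRingType) n (F : 'M[R]_(1 + n)) :
  (forall i, F i ord0 = (i == ord0)%:R) -> (forall j, F ord0 j = (j == ord0)%:R) ->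
  F = block_mx (1%:M : 'M_1) 0 0 (drsubmx F).
Proof.
move=> Fcol Frow; have l0 : lshift n (0 : 'I_1) = ord0 by apply: val_inj.
rewrite -{1}(submxK F); congr block_mx; apply/matrixP => i j;
  rewrite !mxE ?ord1 ?l0 ?Fcol ?Frow //.
Qed.

Section LocalGeneration.
Variables (k : fieldType) (R : comUnitRingType) (pi : {rmorphism R -> k}).
Hypothesis local : forall x : R, pi x != 0 -> x \is a GRing.unit.

(* Over a local ring, an element of SL_n(R) can be brought to have a 1 in
   the top left corner by elementary row operations: some entry of the first
   column is a unit, since the determinant reduces to 1. *)
Lemma first_col_pivot n (g : 'M[R]_n.+1) :
  \det g = 1 -> exists2 e, elementary e & (e *m g) ord0 ord0 = 1.
Proof.
case: n g => [|m] g detg.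
  by exists 1%:M; [exact: elementary1 | rewrite mul1mx -detg det_mx11].
have [i0 unit_i0] : exists i, pi (g i ord0) != 0.
  case: (pickP (fun i => pi (g i ord0) != 0)) => [i hi|none]; first by exists i.
  move: (congr1 pi detg); rewrite (expand_det_col g ord0) rmorph_sum rmorph1 big1.
    by move/esym/eqP; rewrite oner_eq0.
  by move=> i _; rewrite rmorphM (eqP (negbFE (none i))) mul0r.
have pivot_from_below (h : 'M[R]_m.+2) i : i != ord0 -> h i ord0 \is a GRing.unit ->
    exists2 e, elementary e & (e *m h) ord0 ord0 = 1.
  move=> ni u; exists (elem_mx ord0 i ((1 - h ord0 ord0) / h i ord0)).
    by apply: elementary_elem; rewrite eq_sym.
  by rewrite mul_elem_mx_l eqxx mul1r -mulrA mulVr // mulr1 addrC subrK.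
have [i0_top|ni0] := eqVneq i0 ord0; last exact: pivot_from_below ni0 (local unit_i0).
(* otherwise the top entry is a unit and we first create a 1 in row 1 *)
pose i1 : 'I_m.+2 := lift ord0 ord0; have ni1 : i1 != ord0 by rewrite eq_sym neq_lift.
have u00 : g ord0 ord0 \is a GRing.unit by apply: local; rewrite -{1}i0_top.
pose t := elem_mx i1 ord0 ((1 - g i1 ord0) / g ord0 ord0).
have tg10 : (t *m g) i1 ord0 = 1.
  by rewrite mul_elem_mx_l eqxx mul1r -mulrA mulVr // mulr1 addrC subrK.
have [e Ee etg00] : exists2 e, elementary e & (e *m (t *m g)) ord0 ord0 = 1.
  by apply: pivot_from_below ni1 _; rewrite tg10 unitr1.
exists (e *m t); last by rewrite -mulmxA.
exact: elementary_mul Ee (elementary_elem _ ni1).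
Qed.

(* SL_n(R) = E_n(R) for a local ring R: reduce the first column and (by
   transposition) the first row, then conclude by induction on n. *)
Lemma SL_elementary n (g : 'M[R]_n) : \det g = 1 -> elementary g.
Proof.
elim: n g => [|n IH] g detg.
  by rewrite (_ : g = 1%:M); [exact: elementary1 | apply/matrixP => [[]]].
have [e1 Ee1 pivot1] := first_col_pivot detg.
have [e2 Ee2 [col2 row2]] := clear_first_col pivot1.
pose h := e2 *m (e1 *m g).
have hT00 : h^T ord0 ord0 = 1 by rewrite mxE /h col2.
have [e3 Ee3 [col3 row3]] := clear_first_col hT00.
pose F : 'M_(1 + n) := e3 *m h^T.
have detF : \det F = 1.
  rewrite /F det_mulmx det_tr /h !det_mulmx (det_elementary Ee3).
  by rewrite (det_elementary Ee2) (det_elementary Ee1) detg !mul1r.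
have FE : F = block_mx (1%:M : 'M_1) 0 0 (drsubmx F).
  by apply: first_row_col_block => // j; rewrite row3 mxE col2.
have EF : elementary F.
  rewrite FE; apply/elementary_block/IH.
  by move: detF; rewrite {1}FE det_ublock det1 mul1r.
have Eh : elementary h.
  by rewrite -(trmxK h); apply/elementary_tr/(elementary_cancel_l Ee3).
exact: elementary_cancel_l Ee1 (elementary_cancel_l Ee2 Eh).
Qed.

End LocalGeneration.

Section SteinbergRelations.
Variables (R : comUnitRingType) (n : nat).
Implicit Types (a b c i j : 'I_n) (x y r s : R).

Lemma elem_mx_commutator a b c r s : a != b -> b != c -> a != c ->
  elem_mx a b r *m elem_mx b c s *m elem_mx a b (- r) *m elem_mx b c (- s) =
  elem_mx a c (r * s).
Proof.
move=> /negPf ab /negPf bc /negPf ac.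
have ba := ab; rewrite eq_sym in ba; have cb := bc; rewrite eq_sym in cb.
have ca := ac; rewrite eq_sym in ca.
apply/matrixP=> i j; rewrite -!mulmxA !mul_elem_mx_l !elem_mxE.
case_idx i a; [|case_idx i b; [|case_idx i c]];
case_idx j a; try (case_idx j b; [|case_idx j c]); simpl_idx; ring.
Qed.

(* The monomial matrix acting as [[0, x], [-y, 0]] on the coordinates a, b
   and as the identity elsewhere; for y = x^-1 it is the Weyl element. *)
Definition weyl_mx a b x y : 'M[R]_n :=
  1%:M - delta_mx a a - delta_mx b b + x *: delta_mx a b - y *: delta_mx b a.

Lemma weyl_mxE a b x y i j : weyl_mx a b x y i j =
  (i == j)%:R - ((i == a) && (j == a))%:R - ((i == b) && (j == b))%:R
  + ((i == a) && (j == b))%:R * x - ((i == b) && (j == a))%:R * y.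
Proof. by rewrite /weyl_mx !mxE ![_ * ((_ && _)%:R)]mulrC. Qed.

Lemma weyl_mx_offdiag a b x y : a != b -> weyl_mx a b x y a b = x.
Proof.
move=> /negPf ab; have ba := ab; rewrite eq_sym in ba.
by rewrite weyl_mxE; simpl_idx; ring.
Qed.

Lemma mul_weyl_mx_l a b x y (B : 'M[R]_n) i j : a != b ->
  (weyl_mx a b x y *m B) i j =
  if i == a then x * B b j else if i == b then - (y * B a j) else B i j.
Proof.
move=> /negPf ab; have ba := ab; rewrite eq_sym in ba.
have mul_delta p q : (delta_mx p q *m B) i j = (i == p)%:R * B q j.
  rewrite !mxE (bigD1 q) //= mxE eqxx andbT big1 ?addr0 //.
  by move=> l /negPf lq; rewrite mxE lq andbF mul0r.
rewrite /weyl_mx !mulmxDl !mulNmx mul1mx -!scalemxAl.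
rewrite ![((_ + _ : 'M_n) _ _)]mxE ![((- _ : 'M_n) _ _)]mxE.
rewrite ![((_ *: _ : 'M_n) _ _)]mxE !mul_delta.
case_idx i a; [|case_idx i b]; simpl_idx; ring.
Qed.

Lemma weyl_mx3 a b x1 y1 x2 y2 x3 y3 : a != b ->
  weyl_mx a b x1 y1 *m weyl_mx a b x2 y2 *m weyl_mx a b x3 y3 =
  weyl_mx a b (- (x1 * y2 * x3)) (- (y1 * x2 * y3)).
Proof.
move=> ab; apply/matrixP=> i j; rewrite -mulmxA !mul_weyl_mx_l // !weyl_mxE.
move/negPf: ab => ab; have ba := ab; rewrite eq_sym in ba.
case_idx i a; [|case_idx i b]; case_idx j a; try case_idx j b; simpl_idx; ring.
Qed.

Lemma weyl_factor a b x y : a != b -> x * y = 1 ->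
  elem_mx a b x *m elem_mx b a (- y) *m elem_mx a b x = weyl_mx a b x y.
Proof.
move=> /negPf ab xy; have ba := ab; rewrite eq_sym in ba.
apply/matrixP=> i j; rewrite -!mulmxA !mul_elem_mx_l !elem_mxE weyl_mxE.
case_idx i a; [|case_idx i b]; case_idx j a; try case_idx j b; simpl_idx;
  do 3 rewrite ?mul0r ?mul1r ?mulr0 ?mulr1 ?addr0 ?add0r ?subr0 ?sub0r ?oppr0;
  rewrite ?mulrN ?mulNr ?(mulrC y x) ?xy; ring.
Qed.

Lemma weyl_factor' a b x y : a != b -> x * y = 1 ->
  elem_mx b a (- y) *m elem_mx a b x *m elem_mx b a (- y) = weyl_mx a b x y.
Proof.
move=> /negPf ab xy; have ba := ab; rewrite eq_sym in ba.
apply/matrixP=> i j; rewrite -!mulmxA !mul_elem_mx_l !elem_mxE weyl_mxE.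
case_idx i a; [|case_idx i b]; case_idx j a; try case_idx j b; simpl_idx;
  do 3 rewrite ?mul0r ?mul1r ?mulr0 ?mulr1 ?addr0 ?add0r ?subr0 ?sub0r ?oppr0;
  rewrite ?mulrN ?mulNr ?(mulrC y x) ?xy; ring.
Qed.

(* Without assuming x y = 1 the two products differ in their (a, b) entry by
   x (1 - x y); this detects x y = 1 when x is a unit. *)
Lemma weyl_factor_offdiag a b x y : a != b ->
  (elem_mx a b x *m elem_mx b a (- y) *m elem_mx a b x) a b = x + x * (1 - x * y).
Proof.
move=> /negPf ab; have ba := ab; rewrite eq_sym in ba.
rewrite -!mulmxA !mul_elem_mx_l !elem_mxE; simpl_idx; ring.
Qed.

Lemma weyl_factor'_offdiag a b x y : a != b ->
  (elem_mx b a (- y) *m elem_mx a b x *m elem_mx b a (- y)) a b = x.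
Proof.
move=> /negPf ab; have ba := ab; rewrite eq_sym in ba.
rewrite -!mulmxA !mul_elem_mx_l !elem_mxE; simpl_idx; ring.
Qed.

End SteinbergRelations.

Section LocalRingFacts.
Variables (k : fieldType) (R S : comUnitRingType) (pi : {rmorphism R -> k}).
Hypothesis local : forall x : R, pi x != 0 -> x \is a GRing.unit.

Lemma unit_or_unit_add1 (r : R) :
  r \is a GRing.unit \/ exists2 u, u \is a GRing.unit & r = u + 1.
Proof.
have [pir0|] := eqVneq (pi r) 0; last by left; apply: local.
right; exists (r - 1); last by rewrite subrK.
by apply: local; rewrite rmorphB rmorph1 pir0 sub0r oppr_eq0 oner_eq0.
Qed.

Lemma additive_eq_on_units (F G : R -> S) :
  {morph F : x y / x + y} -> {morph G : x y / x + y} -> F 1 = G 1 ->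
  {in GRing.unit, F =1 G} -> F =1 G.
Proof.
move=> FD GD F1 FG r; have [/FG //|[u /FG Fu ->]] := unit_or_unit_add1 r.
by rewrite FD GD F1 Fu.
Qed.

Lemma multiplicative_from_units (F : R -> S) :
  {morph F : x y / x + y} -> F 1 = 1 ->
  {in GRing.unit &, {morph F : x y / x * y}} -> {morph F : x y / x * y}.
Proof.
move=> FD F1 FM x y.
have [ux|[u uu ->]] := unit_or_unit_add1 x; have [uy|[v uv ->]] := unit_or_unit_add1 y.
- exact: FM.
- by rewrite mulrDr mulr1 !FD FM // F1 mulrDr mulr1.
- by rewrite mulrDl mul1r !FD FM // F1 mulrDl mul1r.
- by rewrite mulrDl mulrDr mul1r mulr1 !FD FM ?F1 //; ring.
Qed.

End LocalRingFacts.

Lemma invmx_rinv (R : comUnitRingType) n (A B : 'M[R]_n) : A *m B = 1%:M -> invmx A = B.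
Proof.
move=> AB; have [uA _] := mulmx1_unit AB.
by rewrite -[RHS](mulKmx uA) AB mulmx1.
Qed.

Section RMorphismOf.
Variables (R S : comUnitRingType) (f : R -> S).
Hypotheses (fB : {morph f : x y / x - y}) (f1 : f 1 = 1) (fM : {morph f : x y / x * y}).
Definition rmorph_fun := f.
HB.instance Definition _ := GRing.isZmodMorphism.Build R S rmorph_fun fB.
HB.instance Definition _ := GRing.isMonoidMorphism.Build R S rmorph_fun (f1, fM).
Definition rmorph_of : {rmorphism R -> S} := rmorph_fun.
Lemma rmorph_ofE x : rmorph_of x = f x. Proof. by []. Qed.
End RMorphismOf.

Section ElementaryLifts.
Variables (k : fieldType) (R S : comUnitRingType).
Variables (piR : {rmorphism R -> k}) (piS : {rmorphism S -> k}).
Hypotheses (localR : forall x : R, piR x != 0 -> x \is a GRing.unit)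
           (localS : forall x : S, piS x != 0 -> x \is a GRing.unit).
Variable m : nat.
Local Notation n := m.+2.
Variable rho : 'M[R]_n -> 'M[S]_n.
Hypotheses (rho_unit : forall g, inSL g -> rho g \in unitmx)
  (rhoM : forall g h, inSL g -> inSL h -> rho (g *m h) = rho g *m rho h)
  (rho_red : forall g, inSL g -> map_mx piS (rho g) = map_mx piR g)
  (rho_elem : forall a b : 'I_n, a != b -> forall r,
     exists c, rho (elem_mx a b r) = elem_mx a b c).
Implicit Types (a b c : 'I_n) (r s u v : R).

(* The coefficient c^r_{ab} with rho (t^r_{ab}) = t^{c^r_{ab}}_{ab}. *)
Definition coef a b r : S := rho (elem_mx a b r) a b.

Lemma rho_elem_coef a b r : a != b -> rho (elem_mx a b r) = elem_mx a b (coef a b r).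
Proof. by move=> ab; have [c rc] := rho_elem ab r; rewrite /coef rc elem_mx_offdiag. Qed.

Lemma rho1 : rho 1%:M = 1%:M.
Proof.
have SL1 : inSL (1%:M : 'M[R]_n) by rewrite /inSL det1.
have := rhoM SL1 SL1; rewrite mulmx1 => rho11.
by rewrite -[LHS](mulKmx (rho_unit SL1)) -rho11 mulVmx ?rho_unit.
Qed.

Lemma rho_elemM a b r g : a != b -> elementary g ->
  rho (elem_mx a b r *m g) = elem_mx a b (coef a b r) *m rho g.
Proof.
move=> ab Eg; rewrite rhoM ?rho_elem_coef // /inSL ?det_elem_mx //.
exact: det_elementary.
Qed.

Lemma rho_elem3 a1 b1 a2 b2 a3 b3 r1 r2 r3 : a1 != b1 -> a2 != b2 -> a3 != b3 ->
  rho (elem_mx a1 b1 r1 *m elem_mx a2 b2 r2 *m elem_mx a3 b3 r3) =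
  elem_mx a1 b1 (coef a1 b1 r1) *m elem_mx a2 b2 (coef a2 b2 r2)
    *m elem_mx a3 b3 (coef a3 b3 r3).
Proof.
move=> h1 h2 h3; rewrite -!mulmxA !rho_elemM ?rho_elem_coef //.
  by apply: elementary_elem.
by apply: elementary_mul; apply: elementary_elem.
Qed.

Lemma coefD a b r s : a != b -> coef a b (r + s) = coef a b r + coef a b s.
Proof.
move=> ab; rewrite {1}/coef -elem_mxD // rho_elemM //; last exact: elementary_elem.
by rewrite rho_elem_coef // elem_mxD // elem_mx_offdiag.
Qed.

Lemma coefN a b r : a != b -> coef a b (- r) = - coef a b r.
Proof.
move=> ab; apply/eqP; rewrite -addr_eq0 -coefD // addNr.
by rewrite /coef elem_mx0 rho1 mxE (negPf ab).
Qed.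

Lemma coef_red a b r : a != b -> piS (coef a b r) = piR r.
Proof.
move=> ab; have := rho_red (det_elem_mx r ab).
by move/matrixP/(_ a b); rewrite !mxE (negPf ab) !eqxx mulr1 add0r.
Qed.

Lemma coef_unit a b u : a != b -> u \is a GRing.unit -> coef a b u \is a GRing.unit.
Proof.
move=> ab uu; apply: localS; rewrite coef_red //.
by have := rmorph_unit piR uu; rewrite unitfE.
Qed.

(* Image of the Weyl relation: for a unit u, c^u_{ab} c^{u^-1}_{ba} = 1. *)
Lemma coef_weyl a b u : a != b -> u \is a GRing.unit ->
  coef a b u * coef b a u^-1 = 1.
Proof.
move=> ab uu; have ba : b != a by rewrite eq_sym.
have braid : elem_mx a b u *m elem_mx b a (- u^-1) *m elem_mx a b u =
             elem_mx b a (- u^-1) *m elem_mx a b u *m elem_mx b a (- u^-1).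
  by rewrite weyl_factor ?weyl_factor' ?mulrV.
move/(congr1 rho): braid; rewrite !rho_elem3 // !coefN //.
move/matrixP/(_ a b); rewrite weyl_factor_offdiag // weyl_factor'_offdiag // => entry.
have : coef a b u * (1 - coef a b u * coef b a u^-1) = coef a b u * 0.
  by rewrite mulr0; apply: (addrI (coef a b u)); rewrite addr0.
by move/(mulrI (coef_unit ab uu))/eqP; rewrite subr_eq0 => /eqP.
Qed.

Lemma rho_elem4 a1 b1 a2 b2 a3 b3 a4 b4 r1 r2 r3 r4 :
  a1 != b1 -> a2 != b2 -> a3 != b3 -> a4 != b4 ->
  rho (elem_mx a1 b1 r1 *m elem_mx a2 b2 r2 *m elem_mx a3 b3 r3 *m elem_mx a4 b4 r4) =
  elem_mx a1 b1 (coef a1 b1 r1) *m elem_mx a2 b2 (coef a2 b2 r2)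
    *m elem_mx a3 b3 (coef a3 b3 r3) *m elem_mx a4 b4 (coef a4 b4 r4).
Proof.
move=> h1 h2 h3 h4; rewrite rhoM ?rho_elem3 ?rho_elem_coef //.
  by rewrite /inSL !det_mulmx !det_elem_mx ?mulr1.
exact: det_elem_mx.
Qed.

Lemma coef_inv1 a b : a != b -> coef a b 1 * coef b a 1 = 1.
Proof. by move=> ab; have := coef_weyl ab (unitr1 R); rewrite invr1. Qed.

(* Image of the commutator relation: c^{rs}_{ac} = c^r_{ab} c^s_{bc}. *)
Lemma coef_comm a b c r s : a != b -> b != c -> a != c ->
  coef a c (r * s) = coef a b r * coef b c s.
Proof.
move=> ab bc ac; have := congr1 rho (elem_mx_commutator r s ab bc ac).
rewrite rho_elem4 // !coefN // elem_mx_commutator // rho_elem_coef //.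
by move/matrixP/(_ a c); rewrite !elem_mx_offdiag.
Qed.

(* Image of w(u) w(-1) w(v) = w(uv) for the Weyl elements w(t) = w_{ab}(t):
   c^{uv}_{ab} = c^u_{ab} c^v_{ab} c^1_{ba} for units u, v. *)
Lemma coef_mul_units a b u v : a != b -> u \is a GRing.unit -> v \is a GRing.unit ->
  coef a b (u * v) = coef a b u * coef a b v * coef b a 1.
Proof.
move=> ab uu uv; have ba : b != a by rewrite eq_sym.
have un1 : (-1 : R) \is a GRing.unit by rewrite unitrN unitr1.
pose w (t : R) := elem_mx a b t *m elem_mx b a (- t^-1) *m elem_mx a b t.
have w_weyl t : t \is a GRing.unit -> w t = weyl_mx a b t t^-1.
  by move=> ut; rewrite /w weyl_factor ?mulrV.
have SLw t : inSL (w t) by rewrite /inSL !det_mulmx !det_elem_mx ?mulr1.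
have rho_w t : t \is a GRing.unit ->
    rho (w t) = weyl_mx a b (coef a b t) (coef b a t^-1).
  by move=> ut; rewrite rho_elem3 // coefN // weyl_factor // coef_weyl.
have weyl_rel : w u *m w (-1) *m w v = w (u * v).
  by rewrite !w_weyl ?unitrM ?uu // weyl_mx3 // invrN1 invrM //; congr weyl_mx; ring.
have SLuv : inSL (w u *m w (-1)) by rewrite /inSL det_mulmx !SLw mulr1.
move/(congr1 rho): weyl_rel; rewrite (rhoM SLuv (SLw v)) (rhoM (SLw u) (SLw (-1))).
rewrite !rho_w ?unitrM ?uu // weyl_mx3 //.
by move/matrixP/(_ a b); rewrite !weyl_mx_offdiag // invrN1 coefN // => <-; ring.
Qed.

Let i0 : 'I_n := ord0.
Let i1 : 'I_n := lift ord0 ord0.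
Let i01 : i0 != i1. Proof. exact: neq_lift. Qed.

Definition lift_mor r : S := coef i0 i1 r * coef i1 i0 1.

Lemma lift_morD : {morph lift_mor : x y / x + y}.
Proof. by move=> x y; rewrite /lift_mor coefD // mulrDl. Qed.

Lemma lift_morB : {morph lift_mor : x y / x - y}.
Proof. by move=> x y; rewrite lift_morD /lift_mor coefN // mulNr. Qed.

Lemma lift_mor1 : lift_mor 1 = 1.
Proof. exact: coef_inv1. Qed.

Lemma lift_morM : {morph lift_mor : x y / x * y}.
Proof.
apply: (multiplicative_from_units localR lift_morD lift_mor1) => u v uu uv.
by rewrite /lift_mor coef_mul_units //; ring.
Qed.

Definition lift_rmorph : {rmorphism R -> S} := rmorph_of lift_morB lift_mor1 lift_morM.

Lemma lift_rmorph_hom : is_Chom piR piS lift_rmorph.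
Proof. by move=> x; rewrite rmorph_ofE rmorphM !coef_red // rmorph1 mulr1. Qed.

(* If c^r_{ab} = c^1_{ab} f(r) for all r, then likewise for (b, a): both
   sides are additive in r, and agree on units by the Weyl relation. *)
Lemma coef_mor_sym a b : a != b ->
  (forall r, coef a b r = coef a b 1 * lift_mor r) ->
  forall r, coef b a r = coef b a 1 * lift_mor r.
Proof.
move=> ab coef_ab; have ba : b != a by rewrite eq_sym.
apply: (@additive_eq_on_units _ _ _ _ localR).
- by move=> x y; rewrite coefD.
- by move=> x y; rewrite lift_morD mulrDr.
- by rewrite lift_mor1 mulr1.
- move=> v uv; have uv' : v^-1 \is a GRing.unit by rewrite unitrV.
  have weyl_v := coef_weyl ab uv'; rewrite invrK coef_ab in weyl_v.
  have mor_v : lift_mor v^-1 * lift_mor v = 1 by rewrite -lift_morM mulVr // lift_mor1.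
  have : coef b a v * ((coef a b 1 * coef b a 1) * (lift_mor v^-1 * lift_mor v)) =
     (coef a b 1 * lift_mor v^-1 * coef b a v) * (coef b a 1 * lift_mor v) by ring.
  by rewrite coef_inv1 // mor_v weyl_v !mulr1 mul1r.
Qed.

Lemma coef_to0 a : a != i0 -> forall r, coef a i0 r = coef a i0 1 * lift_mor r.
Proof.
have coef01 r : coef i0 i1 r = coef i0 i1 1 * lift_mor r.
  by rewrite /lift_mor mulrCA coef_inv1 // mulr1.
move=> a0 r; have [->|a1] := eqVneq a i1; first exact: (coef_mor_sym i01 coef01).
have e1 := coef_comm r 1 a0 i01 a1; have e2 := coef_comm 1 r a0 i01 a1.
rewrite mulr1 in e1; rewrite mul1r e1 (coef01 r) in e2.
have : coef a i0 r * (coef i0 i1 1 * coef i1 i0 1) =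
    coef a i0 1 * lift_mor r * (coef i0 i1 1 * coef i1 i0 1) by rewrite mulrA e2; ring.
by rewrite coef_inv1 // !mulr1.
Qed.

Lemma coef_from0 b : b != i0 -> forall r, coef i0 b r = coef i0 b 1 * lift_mor r.
Proof. by move=> b0; apply: coef_mor_sym b0 (coef_to0 b0). Qed.

(* The diagonal entries of the conjugating matrix and of its inverse. *)
Definition scale_row a : S := if a == i0 then 1 else coef a i0 1.
Definition scale_col b : S := if b == i0 then 1 else coef i0 b 1.

Lemma scale_rowK a : scale_row a * scale_col a = 1.
Proof.
by rewrite /scale_row /scale_col; case: ifPn => [_|a0]; rewrite ?mulr1 ?coef_inv1.
Qed.

Lemma scale_row_red a : piS (scale_row a) = 1.
Proof.
by rewrite /scale_row; case: ifPn => [_|a0]; rewrite ?rmorph1 // coef_red // rmorph1.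
Qed.

Lemma coef_factor a b r : a != b -> coef a b r = scale_row a * scale_col b * lift_mor r.
Proof.
move=> ab; rewrite /scale_row /scale_col.
have [ea|a0] := eqVneq a i0.
  by subst a; rewrite eq_sym (negPf ab) mul1r coef_from0 // eq_sym.
have [eb|b0] := eqVneq b i0; first by subst b; rewrite mulr1 coef_to0.
have b0' : i0 != b by rewrite eq_sym.
by rewrite -{1}[r]mulr1 (coef_comm r 1 a0 b0' ab) coef_to0 //; ring.
Qed.

Definition conj_diag : 'M[S]_n := diag_mx (\row_i scale_row i).
Definition conj_diag' : 'M[S]_n := diag_mx (\row_i scale_col i).

Lemma conj_diagK : conj_diag *m conj_diag' = 1%:M.
Proof.
apply/matrixP=> i j; rewrite mul_diag_mx !mxE.
by case: (eqVneq i j) => [->|_]; rewrite ?mulr1n ?mulr0n ?mulr0 // scale_rowK.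
Qed.

Lemma invmx_conj_diag : invmx conj_diag = conj_diag'.
Proof. exact: invmx_rinv conj_diagK. Qed.

Lemma conj_diag_red : map_mx piS conj_diag = 1%:M.
Proof.
apply/matrixP=> i j; rewrite !mxE rmorphMn scale_row_red.
by case: (i == j); rewrite ?rmorph1 ?mulr1n ?mulr0n ?rmorph0.
Qed.

Lemma conj_diag_elem a b r : a != b ->
  conj_diag *m elem_mx a b (lift_rmorph r) *m conj_diag' = elem_mx a b (coef a b r).
Proof.
move=> ab; apply/matrixP=> i j; rewrite mul_mx_diag mul_diag_mx !mxE.
rewrite coef_factor // rmorph_ofE.
have [->|ij] := eqVneq i j.
  have -> : (j == a) && (j == b) = false.
    by case: (eqVneq j a) => // ->; rewrite (negPf ab).
  by rewrite /= !mulr0 !addr0 mulr1 scale_rowK.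
rewrite /= !add0r; case: (eqVneq i a) => [->|_]; case: (eqVneq j b) => [->|_] /=;
  rewrite ?mulr1 ?mul0r ?mulr0 //; ring.
Qed.

Lemma rho_conj_elementary g : elementary g ->
  rho g = conj_diag *m map_mx lift_rmorph g *m invmx conj_diag.
Proof.
rewrite invmx_conj_diag.
elim=> [|a b r g' ab Eg' IH]; first by rewrite rho1 map_mx1 mulmx1 conj_diagK.
rewrite rho_elemM // IH -conj_diag_elem // map_mxM map_elem_mx.
by rewrite !mulmxA -(mulmxA _ conj_diag') (mulmx1C conj_diagK) mulmx1.
Qed.

Lemma elementary_lift_conj :
  exists f : {rmorphism R -> S},
    is_Chom piR piS f /\ strict_equiv piS (fun A => map_mx f A) rho.
Proof.
exists lift_rmorph; split; first exact: lift_rmorph_hom.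
exists conj_diag; split; first exact: conj_diag_red.
by move=> g SLg; apply/rho_conj_elementary/(SL_elementary localR).
Qed.

End ElementaryLifts.

Section StrictEquivalence.
Variables (k : fieldType) (R S : comUnitRingType) (piS : {rmorphism S -> k}).
Hypothesis localS : forall x : S, piS x != 0 -> x \is a GRing.unit.
Variable n : nat.
Implicit Types (M : 'M[S]_n) (rho : 'M[R]_n -> 'M[S]_n).

(* Matrices reducing to the identity are invertible: their determinant
   reduces to 1, hence is a unit in the local ring S. *)
Lemma unitmx_red1 M : map_mx piS M = 1%:M -> M \in unitmx.
Proof.
by move=> M1; rewrite unitmxE; apply: localS; rewrite -det_map_mx M1 det1 oner_neq0.
Qed.

Lemma invmx_red1 M : map_mx piS M = 1%:M -> map_mx piS (invmx M) = 1%:M.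
Proof.
move=> M1; rewrite -[LHS]mulmx1 -M1 -map_mxM mulVmx ?map_mx1 //.
exact: unitmx_red1.
Qed.

Lemma strict_equiv_sym rho1 rho2 :
  strict_equiv piS rho1 rho2 -> strict_equiv piS rho2 rho1.
Proof.
case=> M [M1 conjM]; have uM := unitmx_red1 M1.
exists (invmx M); split; first exact: invmx_red1.
move=> g SLg; rewrite invmxK conjM // !mulmxA mulVmx // mul1mx.
by rewrite -mulmxA mulVmx ?mulmx1.
Qed.

Lemma strict_equiv_trans rho1 rho2 rho3 :
  strict_equiv piS rho1 rho2 -> strict_equiv piS rho2 rho3 ->
  strict_equiv piS rho1 rho3.
Proof.
case=> M [M1 conjM] [N [N1 conjN]].
have [uM uN] := (unitmx_red1 M1, unitmx_red1 N1).
exists (N *m M); split; first by rewrite map_mxM M1 N1 mulmx1.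
have -> : invmx (N *m M) = invmx M *m invmx N.
  by apply: invmx_rinv; rewrite mulmxA -(mulmxA N) mulmxV // mulmx1 mulmxV.
by move=> g SLg; rewrite conjN // conjM // !mulmxA.
Qed.

End StrictEquivalence.

Lemma mpow_map (k : fieldType) (R S : comUnitRingType) (piR : {rmorphism R -> k})
  (piS : {rmorphism S -> k}) (f : {rmorphism R -> S}) :
  is_Chom piR piS f -> forall N x, mpow piR N x -> mpow piS N (f x).
Proof.
move=> hf; elim=> [//|N IH] x [s [hs ->]].
exists [seq (f p.1, f p.2) | p <- s]; split.
  move=> p /mapP [q qs ->] /=; have [h1 h2] := hs q qs; split; last exact: IH.
  by rewrite /mideal hf.
by rewrite big_map rmorph_sum; apply: eq_bigr => q _; rewrite rmorphM.
Qed.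

Lemma map_mx_lift (k : fieldType) (R S : comUnitRingType) (piR : {rmorphism R -> k})
  (piS : {rmorphism S -> k}) n (f : {rmorphism R -> S}) :
  is_Chom piR piS f -> is_lift piR piS (fun A : 'M[R]_n => map_mx f A).
Proof.
move=> hf; split; first by move=> g SLg; rewrite unitmxE det_map_mx SLg rmorph1 unitr1.
split; first by move=> g h _ _; rewrite map_mxM.
split; first by move=> g _; apply/matrixP=> i j; rewrite !mxE hf.
move=> N; exists N => g _ congr_g i j.
have -> : (1%:M : 'M[S]_n) i j = f ((1%:M : 'M[R]_n) i j) by rewrite !mxE rmorph_nat.
by rewrite mxE -rmorphB; apply: mpow_map hf _ _ (congr_g i j).
Qed.

(* Compare the (a, b) entries of M t^{f r}_{ab} = t^{g r}_{ab} M: they give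
   f(r) M_aa = g(r) M_bb, and r = 1 yields M_aa = M_bb, a unit. *)
Lemma map_mx_strict_equiv_inj (k : fieldType) (R S : comUnitRingType)
  (piS : {rmorphism S -> k}) n (a b : 'I_n) (f g : {rmorphism R -> S}) :
  (forall x : S, piS x != 0 -> x \is a GRing.unit) -> a != b ->
  strict_equiv piS (fun A : 'M[R]_n => map_mx f A) (fun A => map_mx g A) -> f =1 g.
Proof.
move=> localS ab [M [M1 conjM]] r; have uM := unitmx_red1 localS M1.
have entry s : g s * M b b = f s * M a a.
  have := conjM _ (det_elem_mx s ab); rewrite !map_elem_mx => conj_s.
  have : elem_mx a b (g s) *m M = M *m elem_mx a b (f s) by rewrite conj_s mulmxKV.
  by move/matrixP/(_ a b); rewrite mul_elem_mx_l mul_elem_mx_r !eqxx !mul1r => /addrI.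
have Mab : M b b = M a a by have := entry 1; rewrite !rmorph1 !mul1r.
have uMa : M a a \is a GRing.unit.
  by apply: localS; move/matrixP/(_ a a): M1; rewrite !mxE eqxx => ->; apply: oner_neq0.
by apply: (mulIr uMa); rewrite -entry Mab.
Qed.

Unset Implicit Arguments.

Theorem mainTheorem11 (k : finFieldType) (R S : comUnitRingType)
  (piR : {rmorphism R -> k}) (piS : {rmorphism S -> k}) (n : nat)
  (hR : is_CObj piR) (hS : is_CObj piS) (hn : (2 <= n)%N) :
  (* (i) iota_*(S) is injective *)
  (forall f g : {rmorphism R -> S}, is_Chom piR piS f -> is_Chom piR piS g ->
     strict_equiv piS (fun A : 'M[R]_n => map_mx f A) (fun A => map_mx g A) ->
     f =1 g) /\
  (* (ii) characterization of the image, for the class xi = [rho0] *)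
  (forall rho0 : 'M[R]_n -> 'M[S]_n, is_lift piR piS rho0 ->
     ((exists f : {rmorphism R -> S}, is_Chom piR piS f /\
         strict_equiv piS (fun A => map_mx f A) rho0)
      <->
      (exists rho : 'M[R]_n -> 'M[S]_n, is_lift piR piS rho /\
         strict_equiv piS rho0 rho /\
         forall a b : 'I_n, a != b -> forall r : R,
           exists c : S, rho (elem_mx a b r) = elem_mx a b c))).
Proof.
case: hR => [[_ localR] _]; case: hS => [[_ localS] _].
case: n hn => [|[|m]] // _.
split=> [f g _ _|rho0 _].
  exact: map_mx_strict_equiv_inj localS (neq_lift ord0 ord0).
split.
  case=> f [hf equiv_f]; exists (fun A => map_mx f A).
  split; first exact: map_mx_lift.
  split; first exact: strict_equiv_sym.
  by move=> a b _ r; exists (f r); rewrite map_elem_mx.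
case=> rho [[rho_unit [rhoM [rho_red _]]] [equiv0 rho_elem]].
have [f [hf equiv_f]] :=
  elementary_lift_conj localR localS rho_unit rhoM rho_red rho_elem.
exists f; split=> //.
exact: (strict_equiv_trans localS equiv_f) (strict_equiv_sym localS equiv0).
Qed.
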